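(* If an nfc-transducer $\mathcal{T}=(Q,V,\Delta,q_0)$ is consistent with a BPA system $\mathcal{G}=(V,\mathit{Act},\mathcal{R})$, then the equivalence $\equiv^{\mathcal{T}}$ on $V^*$, defined by $\alpha\equiv^{\mathcal{T}}\beta$ iff $\mathcal{T}_{q_0}(\alpha)=\mathcal{T}_{q_0}(\beta)$, is a branching bisimulation in $\mathcal{L}_\mathcal{G}$. Consequently $\mathcal{T}(\alpha)=\mathcal{T}(\beta)$ implies $\alpha\sim\beta$.
   Context: A BPA system $\mathcal{G}=(V,\mathit{Act},\mathcal{R})$: finite variables $V$, finite actions $\mathit{Act}$ (possibly containing silent $\tau$), rules $A\xrightarrow{a}\alpha$ ($A\in V,\alpha\in V^*$). LTS $\mathcal{L}_\mathcal{G}$ has states $V^*$ and transitions $A\beta\xrightarrow{a}\alpha\beta$ for rules $A\xrightarrow{a}\alpha$, $\beta\in V^*$. Branching bisimulation: a relation $\mathcal{B}$ such that for each $(s,t)\in\mathcal{B}$, each move $s\xrightarrow{a}s'$ is matched by either $a=\tau$ and $(s',t)\in\mathcal{B}$, or a path $t=t_0\xrightarrow{\tau}\cdots\xrightarrow{\tau}t_k\xrightarrow{a}t'$ with $(s',t')\in\mathcal{B}$ and $(s,t_i)\in\mathcal{B}$ for $i\in[1,k]$, and symmetrically for moves of $t$; $\sim$ is the largest branching bisimulation. Transducer $\mathcal{T}=(Q,V,\Delta,q_0)$, $\Delta:Q\times V\to Q\times V^*$, reading right to left: $q'\xleftarrow{A/\gamma}q$ means $\Delta(q,A)=(q',\gamma)$,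 extended by $q\xleftarrow{\varepsilon/\varepsilon}q$ and composition $q''\xleftarrow{\alpha A/\beta\gamma}q$ from $q'\xleftarrow{A/\gamma}q$, $q''\xleftarrow{\alpha/\beta}q'$. $\mathcal{T}_q(\alpha)$ is the output from $q$ on $\alpha$; $\mathcal{T}=\mathcal{T}_{q_0}$. $q$-normal forms: $\varepsilon$ or $A_k\cdots A_1$ with $q_k\xleftarrow{A_k/A_k}\cdots q_1\xleftarrow{A_1/A_1}q$. nfc-transducer: each $\mathcal{T}_q(A)$ is a $q$-normal form and $q'\xleftarrow{A/\gamma}q$ implies $q'\xleftarrow{\gamma/\gamma}q$. Long moves: $\alpha\overset{a}{\Rightarrow}_q\beta$ if either $a=\tau$ and $\beta=\mathcal{T}_q(\alpha)$, or $\alpha=\alpha_0\xrightarrow{\tau}\alpha_1\cdots\xrightarrow{\tau}\alpha_k\xrightarrow{a}\beta'$ in $\mathcal{L}_\mathcal{G}$ ($k\ge0$) with $\mathcal{T}_q(\alpha_0)=\cdots=\mathcal{T}_q(\alpha_k)$ and $\mathcal{T}_q(\beta')=\beta$. $\alpha_1\approx_q\alpha_2$ iff for all $a$, $\{\beta\mid\alpha_1\overset{a}{\Rightarrow}_q\beta\}=\{\beta\mid\alpha_2\overset{a}{\Rightarrow}_q\beta\}$. Consistency of $\mathcal{T}$ with $\mathcal{G}$: (1) $A\approx_{q_0}\varepsilon$ if $\mathcal{T}_{q_0}(A)=\varepsilon$; (2) $A\approx_q\mathcal{T}_q(A)$ if $\mathcal{T}_q(A)\ne\varepsilon$; (3)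 $AC\approx_qC$ if $\mathcal{T}_q(AC)=\mathcal{T}_q(C)=C$. *)

From mathcomp Require Import all_boot.
Set Implicit Arguments. Unset Strict Implicit. Unset Printing Implicit Defensive.

Record bpa (V Act : finType) := BPA {
  tau : Act;
  rules : seq (V * Act * seq V)   (* rule (A, a, alpha) means A --a--> alpha *)
}.

Definition step (V Act : finType) (G : bpa V Act) (s : seq V) (a : Act) (t : seq V) : Prop :=
  exists (A : V) (alpha beta : seq V),
    s = A :: beta /\ (A, a, alpha) \in rules G /\ t = alpha ++ beta.

Inductive taus_in (V Act : finType) (G : bpa V Act) (P : seq V -> Prop)
  : seq V -> seq V -> Prop :=
| taus_refl t : taus_in G P t t
| taus_cons t t1 tk : step G t (tau G) t1 -> P t1 -> taus_in G P t1 tk -> taus_in G P t tk.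

Definition branching_bisim (V Act : finType) (G : bpa V Act) (B : seq V -> seq V -> Prop) : Prop :=
  forall s t, B s t ->
    (forall a s', step G s a s' ->
        (a = tau G /\ B s' t) \/
        exists tk t', taus_in G (fun ti => B s ti) t tk /\ step G tk a t' /\ B s' t') /\
    (forall a t', step G t a t' ->
        (a = tau G /\ B s t') \/
        exists sk s', taus_in G (fun si => B si t) s sk /\ step G sk a s' /\ B s' t').

Definition bbisimilar (V Act : finType) (G : bpa V Act) (s t : seq V) : Prop :=
  exists B, branching_bisim G B /\ B s t.

Record transducer (V : finType) := Transducer {
  tQ : finType;
  tDelta : tQ -> V -> tQ * seq V;
  tq0 : tQ
}.

Section Trans.
Variables (V : finType) (T : transducer V).

(* run on a reversed word: the transducer reads right to left *)
Fixpoint run_rev (q : tQ T) (rw : seq V) : tQ T * seq V :=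
  match rw with
  | [::] => (q, [::])
  | A :: rw' =>
      let (q', g) := tDelta q A in
      let (q'', b) := run_rev q' rw' in (q'', b ++ g)
  end.

(* trans q alpha = (q'', beta) iff q'' <--alpha/beta-- q *)
Definition trans (q : tQ T) (alpha : seq V) : tQ T * seq V := run_rev q (rev alpha).

Definition tout (q : tQ T) (alpha : seq V) : seq V := (trans q alpha).2.

Fixpoint nf_rev (q : tQ T) (rw : seq V) : bool :=
  match rw with
  | [::] => true
  | A :: rw' => ((tDelta q A).2 == [:: A]) && nf_rev (tDelta q A).1 rw'
  end.
Definition is_normal (q : tQ T) (alpha : seq V) : bool := nf_rev q (rev alpha).

Definition nfc : Prop :=
  (forall q A, is_normal q (tout q [:: A])) /\
  (forall q A, trans q (tDelta q A).2 = tDelta q A).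

End Trans.

Section Consistency.
Variables (V Act : finType) (G : bpa V Act) (T : transducer V).

Inductive tstar (q : tQ T) : seq V -> seq V -> Prop :=
| tstar_refl a : tstar q a a
| tstar_cons a b c : step G a (tau G) b -> tout q a = tout q b -> tstar q b c -> tstar q a c.

Definition long_move (q : tQ T) (alpha : seq V) (a : Act) (beta : seq V) : Prop :=
  (a = tau G /\ beta = tout q alpha) \/
  exists ak b', tstar q alpha ak /\ step G ak a b' /\ tout q b' = beta.

Definition approx (q : tQ T) (a1 a2 : seq V) : Prop :=
  forall a beta, long_move q a1 a beta <-> long_move q a2 a beta.

Definition consistent : Prop :=
  (forall A, tout (tq0 T) [:: A] = [::] -> approx (tq0 T) [:: A] [::]) /\
  (forall q A, tout q [:: A] <> [::] -> approx q [:: A] (tout q [:: A])) /\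
  (forall q A C, tout q [:: A; C] = [:: C] -> tout q [:: C] = [:: C] ->
                 approx q [:: A; C] [:: C]).

End Consistency.

From mathcomp Require Import all_boot.
From Stdlib Require List.
Set Implicit Arguments.
Unset Strict Implicit.
Unset Printing Implicit Defensive.

(* Write [a ~q b] for [approx G q a b]: the two words have the same long moves
   modulo [T_q].  The heart of the proof is [a ~q0 T_q0(a)] for every word [a].
   Because [T] reads right to left, [~q] is compatible with prefixing a word
   [a] to both sides, provided the two suffixes also agree on output and final
   state, and with appending a common suffix [d], the state being moved along
   [d].  Induction on the last letter of [a] then reduces [a ~q T_q(a)] to the
   three consistency clauses: an erased letter is handled by clause (1) or by
   appending, a letter with output [C :: d] by clause (2), and a prefix erased
   above the normal form [C :: d] by repeated use of clause (3).
   Once [T(a) = T(b)] implies [a ~q0 b], a move [a -x-> a'] is a long move of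
   [a] to [T(a')], hence one of [b]; along its tau-prefix [T] is constant,
   which is exactly a branching-bisimulation answer. *)

Section TransducerRuns.
Variables (V : finType) (T : transducer V).
Implicit Types (q : tQ T) (a b : seq V).

Lemma run_rev_cons q A rw :
  run_rev q (A :: rw) = ((run_rev (tDelta q A).1 rw).1,
                         (run_rev (tDelta q A).1 rw).2 ++ (tDelta q A).2).
Proof. by rewrite /=; case: (tDelta q A) => q' g /=; case: (run_rev q' rw). Qed.

Lemma run_rev_cat q r1 r2 :
  run_rev q (r1 ++ r2) = ((run_rev (run_rev q r1).1 r2).1,
                          (run_rev (run_rev q r1).1 r2).2 ++ (run_rev q r1).2).
Proof.
elim: r1 q => [|A r1 IH] q; first by rewrite /= cats0; case: (run_rev q r2).
by rewrite cat_cons !run_rev_cons IH /= catA.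
Qed.

Lemma trans_cat q a b :
  trans q (a ++ b) = ((trans (trans q b).1 a).1, tout (trans q b).1 a ++ tout q b).
Proof. by rewrite /trans rev_cat run_rev_cat. Qed.

Lemma tout_cat q a b : tout q (a ++ b) = tout (trans q b).1 a ++ tout q b.
Proof. by rewrite /tout trans_cat. Qed.

Lemma trans_cat_state q a b : (trans q (a ++ b)).1 = (trans (trans q b).1 a).1.
Proof. by rewrite trans_cat. Qed.

Lemma trans1 q A : trans q [:: A] = tDelta q A.
Proof. by rewrite /trans /=; case: (tDelta q A). Qed.

Lemma nf_rev_rcons q rw C :
  nf_rev q (rcons rw C) = nf_rev q rw && ((tDelta (run_rev q rw).1 C).2 == [:: C]).
Proof.
elim: rw q => [|A rw IH] q; first by rewrite /= andbT.
by rewrite rcons_cons run_rev_cons /= IH andbA.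
Qed.

Lemma normal_cons_step q C d :
  is_normal q (C :: d) -> tDelta (trans q d).1 C = ((trans q (C :: d)).1, [:: C]).
Proof.
rewrite /is_normal rev_cons nf_rev_rcons => /andP [_ /eqP outC].
rewrite -cat1s trans_cat_state trans1 /trans.
by case: (tDelta _ C) outC => q' g /= ->.
Qed.

End TransducerRuns.

Section LongMoves.
Variables (V Act : finType) (G : bpa V Act) (T : transducer V).
Implicit Types (q : tQ T) (a b d u w : seq V).

Lemma step_catr b d x b' : step G b x b' -> step G (b ++ d) x (b' ++ d).
Proof. by move=> [A [al [be [-> [rA ->]]]]]; exists A, al, (be ++ d); rewrite catA. Qed.

Lemma step_cons_catr B b d x w :
  step G ((B :: b) ++ d) x w -> exists2 b', step G (B :: b) x b' & w = b' ++ d.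
Proof.
move=> [A [al [be [/= [<- <-] [rA ->]]]]].
by exists (al ++ b); [exists B, al, b | rewrite catA].
Qed.

Lemma tstar_tout q u w : tstar G q u w -> tout q u = tout q w.
Proof. by elim=> // a b c _ -> _. Qed.

Lemma tstar_trans q u v w : tstar G q u v -> tstar G q v w -> tstar G q u w.
Proof. by elim=> // a b c ab outab _ IH /IH; exact: tstar_cons ab outab. Qed.

Lemma tstar_catr q d b b' : tstar G (trans q d).1 b b' -> tstar G q (b ++ d) (b' ++ d).
Proof.
elim=> [a|a b1 c ab outab _ IH]; first exact: tstar_refl.
by apply: tstar_cons (step_catr d ab) _ IH; rewrite !tout_cat outab.
Qed.

(* The suffix [d] cannot be touched as long as the prefix has nonempty output,
   and this output is constant along [tstar]. *)
Lemma tstar_catr_inv q d b w :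
  tout (trans q d).1 b != [::] -> tstar G q (b ++ d) w ->
  exists2 b', w = b' ++ d & tstar G (trans q d).1 b b'.
Proof.
move=> outb; move eu: (b ++ d) => u0 st.
elim: st b outb eu => [u|u v w0 uv outuv _ IH] [|B b] //= outb eu; subst u.
  by exists (B :: b); last exact: tstar_refl.
have [b1 Bb1 ev] := step_cons_catr uv; subst v.
have outb1 : tout (trans q d).1 (B :: b) = tout (trans q d).1 b1.
  by move: outuv; rewrite -cat_cons !tout_cat; exact: List.app_inv_tail.
have [|b' -> st'] := IH b1 _ erefl; first by rewrite -outb1.
by exists b'; last exact: tstar_cons Bb1 outb1 st'.
Qed.

Lemma long_move_catr q d b x z :
  tout (trans q d).1 b != [::] ->
  long_move G q (b ++ d) x z <->
  exists2 y, long_move G (trans q d).1 b x y & z = y ++ tout q d.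
Proof.
move=> outb; split.
- case=> [[-> ->]|[bk [b' [st [bkb' <-]]]]].
    by exists (tout (trans q d).1 b); [left | rewrite tout_cat].
  have [[|X x'] ebk st'] := tstar_catr_inv outb st; subst bk.
    by move: outb; rewrite (tstar_tout st').
  have [y Xy ->] := step_cons_catr bkb'.
  by exists (tout (trans q d).1 y); [right; exists (X :: x'), y | rewrite tout_cat].
- move=> [y [[-> ->]|[bk [b' [st [bkb' <-]]]]] ->].
    by left; rewrite tout_cat.
  right; exists (bk ++ d), (b' ++ d).
  by split; [exact: tstar_catr | split; [exact: step_catr | rewrite tout_cat]].
Qed.

Lemma step_long_move q u x u' : step G u x u' -> long_move G q u x (tout q u').
Proof. by move=> uu'; right; exists u, u'; split; first exact: tstar_refl. Qed.

Lemma tstar_taus_in q (P : seq V -> Prop) u w :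
  tstar G q u w -> (forall y, tout q y = tout q u -> P y) -> taus_in G P u w.
Proof.
elim=> [a|a b c ab outab _ IH] Pa; first exact: taus_refl.
by apply: taus_cons ab (Pa _ (esym outab)) (IH _) => y yb; apply: Pa; rewrite yb outab.
Qed.

Lemma approx_sym q a b : approx G q a b -> approx G q b a.
Proof. by move=> ab x y; split=> /ab. Qed.

Lemma approx_trans q a b c : approx G q a b -> approx G q b c -> approx G q a c.
Proof. by move=> ab bc x y; split=> [/ab/bc|/bc/ab]. Qed.

Lemma approx_catr q d b b' :
  tout (trans q d).1 b != [::] -> tout (trans q d).1 b' != [::] ->
  approx G (trans q d).1 b b' -> approx G q (b ++ d) (b' ++ d).
Proof.
move=> outb outb' bb' x z.
split=> [/(long_move_catr _ _ outb)|/(long_move_catr _ _ outb')] [y /bb' my ->];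
  by apply/long_move_catr => //; exists y.
Qed.

Lemma approx_catr_erased q b d :
  (trans q d).1 = q -> tout q d = [::] -> tout q b != [::] -> approx G q (b ++ d) b.
Proof.
move=> qd outd outb; rewrite -{1}qd in outb => x z.
rewrite (long_move_catr _ _ outb) qd outd.
by split=> [[y my ->]|mz]; [rewrite cats0 | exists z; rewrite ?cats0].
Qed.

Section SameSuffix.
Variables (q : tQ T) (b b' : seq V).
Hypotheses (out_bb' : tout q b = tout q b') (state_bb' : (trans q b).1 = (trans q b').1).

Lemma tout_catl_same x y :
  tout q (x ++ b) = tout q (y ++ b) -> tout q (x ++ b') = tout q (y ++ b').
Proof. by rewrite !tout_cat out_bb' state_bb'. Qed.

Lemma tstar_catl_same a w : tstar G q (a ++ b) w ->
  (exists2 x, w = x ++ b & x != [::] /\ tstar G q (a ++ b') (x ++ b')) \/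
  (tstar G q (a ++ b') b' /\ tstar G q b w).
Proof.
move eu: (a ++ b) => u0 st.
elim: st a eu => [u|u v w0 uv outuv st IH] [|A a] // eu; subst u.
- by right; split; exact: tstar_refl.
- by left; exists (A :: a); split; last exact: tstar_refl.
- by right; split; [exact: tstar_refl | exact: tstar_cons uv outuv st].
have [a1 Aa1 ev] := step_cons_catr uv; subst v.
have out' := tout_catl_same outuv.
case: (IH a1 erefl) => [[x -> [x0 st']]|[st1 st2]].
  by left; exists x; split; last exact: tstar_cons (step_catr b' Aa1) out' st'.
by right; split; first exact: tstar_cons (step_catr b' Aa1) out' st1.
Qed.

Lemma long_move_catl_same a x z : approx G q b b' ->
  long_move G q (a ++ b) x z -> long_move G q (a ++ b') x z.
Proof.
move=> bb' [[-> ->]|[ak [c [st [akc <-]]]]].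
  by left; split; rewrite // !tout_cat out_bb' state_bb'.
case: (tstar_catl_same st) => [[[|Y y] eak [//= _ st']]|[st1 st2]].
  subst ak; have [y' Yy' ->] := step_cons_catr akc.
  right; exists ((Y :: y) ++ b'), (y' ++ b').
  by split; [|split; [exact: step_catr | rewrite !tout_cat out_bb' state_bb']].
have /bb' [[-> ->]|[ak' [c' [st' [akc' <-]]]]] : long_move G q b x (tout q c).
- by right; exists ak, c.
- by left; rewrite (tstar_tout st1).
- by right; exists ak', c'; split; first exact: tstar_trans st1 st'.
Qed.

End SameSuffix.

Lemma approx_catl_same q a b b' :
  tout q b = tout q b' -> (trans q b).1 = (trans q b').1 ->
  approx G q b b' -> approx G q (a ++ b) (a ++ b').
Proof.
move=> out_bb' state_bb' bb' x z; split; apply: long_move_catl_same => //.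
exact: approx_sym.
Qed.

End LongMoves.

Section BranchingBisimulation.
Variables (V Act : finType) (G : bpa V Act).
Implicit Types (B : seq V -> seq V -> Prop) (P Q : seq V -> Prop).

Lemma taus_in_sub P Q u w : (forall y, P y -> Q y) -> taus_in G P u w -> taus_in G Q u w.
Proof.
move=> PQ; elim=> [a|a b c ab Pb _ IH]; first exact: taus_refl.
exact: taus_cons ab (PQ _ Pb) IH.
Qed.

Lemma branching_bisim_sym B : (forall s t, B s t -> B t s) ->
  (forall s t, B s t -> forall x s', step G s x s' ->
     (x = tau G /\ B s' t) \/
     exists tk t', taus_in G (fun ti => B s ti) t tk /\ step G tk x t' /\ B s' t') ->
  branching_bisim G B.
Proof.
move=> Bsym fwd s t st; split; first exact: fwd.
move=> x t' /(fwd _ _ (Bsym _ _ st)) [[-> t's]|[sk [s' [ts [sks' t's']]]]].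
  by left; split; last exact: Bsym.
right; exists sk, s'; split; first exact: taus_in_sub (Bsym t) ts.
by split; last exact: Bsym.
Qed.

End BranchingBisimulation.

Section Consistent.
Variables (V Act : finType) (G : bpa V Act) (T : transducer V).
Hypotheses (nfcT : nfc T) (consGT : consistent G T).
Implicit Types (q : tQ T) (a u v : seq V).

Lemma trans_tout1 q A : trans q (tout q [:: A]) = trans q [:: A].
Proof. by rewrite /tout trans1; exact: nfcT.2. Qed.

Lemma trans_tout q a : trans q (tout q a) = trans q a.
Proof.
elim/last_ind: a q => [|a A IH] q //.
by rewrite -cats1 tout_cat !trans_cat trans_tout1 IH /tout IH trans_tout1.
Qed.

Lemma tout_idem q a : tout q (tout q a) = tout q a.
Proof. by rewrite {1}/tout trans_tout. Qed.

Lemma trans_erased q A : tout q [:: A] = [::] -> (trans q [:: A]).1 = q.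
Proof. by move=> outA; rewrite -trans_tout1 outA. Qed.

(* Consistency clause (3), applied once for each letter of [a]. *)
Lemma approx_erased_above q C a :
  tout q [:: C] = [:: C] -> tout (trans q [:: C]).1 a = [::] ->
  approx G q (a ++ [:: C]) [:: C].
Proof.
move=> outC; elim/last_ind: a => [|a B IH] //.
rewrite -cats1 tout_cat => /List.app_eq_nil [outa outB].
have stateB := trans_erased outB; rewrite stateB in outa.
have outBC : tout q [:: B; C] = [:: C] by rewrite -cat1s tout_cat outB outC.
rewrite -catA; apply: approx_trans (IH outa).
apply: approx_catl_same (consGT.2.2 q B C outBC outC); first by rewrite outBC.
by rewrite -cat1s trans_cat_state stateB.
Qed.

Lemma approx_cat_normal q a C d :
  is_normal q (C :: d) ->
  (tout (trans q (C :: d)).1 a != [::] ->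
   approx G (trans q (C :: d)).1 a (tout (trans q (C :: d)).1 a)) ->
  approx G q (a ++ C :: d) (tout (trans q (C :: d)).1 a ++ C :: d).
Proof.
set q' := (trans q (C :: d)).1 => nCd IHa.
case: (eqVneq (tout q' a) [::]) => [outa | outa]; last first.
  by apply: approx_catr; rewrite -/q' ?tout_idem //; exact: IHa.
have transC : trans (trans q d).1 [:: C] = (q', [:: C]).
  by rewrite trans1 normal_cons_step.
have outC : tout (trans q d).1 [:: C] = [:: C] by rewrite /tout transC.
rewrite outa -cat1s catA; apply: approx_catr.
- by rewrite tout_cat outC; case: (tout _ a).
- by rewrite outC.
- by apply: approx_erased_above outC _; rewrite transC.
Qed.

(* Clause (1) of consistency is only available at [tq0 T], hence the side
   condition that makes the induction go through. *)
Lemma approx_tout a q : tout q a != [::] \/ q = tq0 T -> approx G q a (tout q a).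
Proof.
elim/last_ind: a q => [|a A IH] q q_a //.
rewrite -cats1 tout_cat in q_a *.
case outA: (tout q [:: A]) => [|C d].
  have stateA := trans_erased outA; rewrite stateA cats0.
  case: (eqVneq (tout q a) [::]) => [outa|outa]; last first.
    exact: approx_trans (approx_catr_erased G stateA outA outa) (IH q (or_introl outa)).
  have q0 : q = tq0 T by case: q_a => //; rewrite stateA outA outa.
  subst q; have aA : approx G (tq0 T) (a ++ [:: A]) (a ++ [::]).
    by apply: approx_catl_same (consGT.1 A outA); rewrite ?outA ?stateA.
  by rewrite cats0 in aA; exact: approx_trans aA (IH _ (or_intror erefl)).
have nCd : is_normal q (C :: d) by rewrite -outA; exact: nfcT.1.
have stateA : (trans q [:: A]).1 = (trans q (C :: d)).1 by rewrite -outA trans_tout1.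
have AC : approx G q [:: A] (C :: d).
  by rewrite -outA; apply: consGT.2.1; rewrite outA.
apply: approx_trans (approx_catl_same a _ stateA AC) _; first by rewrite -outA tout_idem.
rewrite stateA; apply: approx_cat_normal nCd _ => outa; exact: IH (or_introl outa).
Qed.

Lemma approx_tout_eq u v :
  tout (tq0 T) u = tout (tq0 T) v -> approx G (tq0 T) u v.
Proof.
move=> uv; apply: approx_trans (approx_tout (or_intror erefl)) _.
by rewrite uv; exact/approx_sym/approx_tout/or_intror.
Qed.

Lemma tout_eq_answer s t x s' :
  tout (tq0 T) s = tout (tq0 T) t -> step G s x s' ->
  (x = tau G /\ tout (tq0 T) s' = tout (tq0 T) t) \/
  exists tk t', taus_in G (fun ti => tout (tq0 T) s = tout (tq0 T) ti) t tk /\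
                step G tk x t' /\ tout (tq0 T) s' = tout (tq0 T) t'.
Proof.
move=> st /(step_long_move (tq0 T)) /(approx_tout_eq st).
case=> [[-> <-]|[tk [t' [tst [tt' <-]]]]]; first by left.
right; exists tk, t'; split=> //.
by apply: tstar_taus_in tst _ => y ->.
Qed.

End Consistent.

Theorem lemma4p3 (V Act : finType) (G : bpa V Act) (T : transducer V) :
  nfc T -> consistent G T ->
  branching_bisim G (fun alpha beta => tout (tq0 T) alpha = tout (tq0 T) beta) /\
  (forall alpha beta, tout (tq0 T) alpha = tout (tq0 T) beta -> bbisimilar G alpha beta).
Proof.
move=> nfcT consGT.
set B := fun alpha beta => tout (tq0 T) alpha = tout (tq0 T) beta.
have bisimB : branching_bisim G B.
  apply: branching_bisim_sym => [s t /esym // | s t st x s' ss'].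
  exact: (tout_eq_answer nfcT consGT st ss').
by split=> // alpha beta ab; exists B.
Qed.
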